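(* Let $m,N\in\mathbb N$, let $\mathcal B=(\mathcal B_1,\dots,\mathcal B_B)$ be a partition of $\{1,\dots,N\}$ with weights $\omega=(\omega_b)$, $\omega_b\ge1$. Assume $A\in\mathbb R^{m\times N}$ satisfies the $\ell^2_\omega$-BRNSP of order $s\ge\|\omega\|_\infty^2$ with constants $0<\rho<1$, $\tau>0$. Let $x\in\mathbb R^N$ and $y=Ax+e$ with $\|e\|_2\le\eta$. Let $\hat x$ be a solution of $$\min_{z\in\mathbb R^N}\|z\|_{2,1}^{(\omega)}=\sum_{j=1}^B\omega_j\|z[\mathcal B_j]\|_2\quad\text{s.t. }\|Az-y\|_2\le\eta.$$ Then $$\|x-\hat x\|_{2,1}^{(\omega)}\le 2C_\rho\,\sigma_s(x)_{2,1}^{(\omega)}+2D_{\rho,\tau}\sqrt s\,\eta,\qquad \|x-\hat x\|_2\le 2C_\rho\frac{\sigma_s(x)_{2,1}^{(\omega)}}{\sqrt s}+2D_{\rho,\tau}\eta,$$ where $C_\rho=\frac{(1+\rho)^2}{1-\rho}$ and $D_{\rho,\tau}=\frac{3+\rho}{1-\rho}\tau$.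
   Context: Block structure: $\mathcal B=(\mathcal B_1,\dots,\mathcal B_B)$ partition of $\{1,\dots,N\}$; $x[b]=x[\mathcal B_b]$; for $S\subseteq\{1,\dots,B\}$, $x[S]$ equals $x$ on blocks in $S$ and $0$ elsewhere, $S^c$ its complement in $\{1,\dots,B\}$. Weights $\omega_b\ge1$, $\|\omega\|_\infty=\max_b\omega_b$, $\omega(S)=\sum_{b\in S}\omega_b^2$. $\|x\|_{2,p}^{(\omega)}=\big(\sum_b\omega_b^{2-p}\|x[b]\|_2^p\big)^{1/p}$ (note $\|x\|_{2,2}^{(\omega)}=\|x\|_2$). $\|x\|_0^{(\omega)}=\omega(\{b:x[b]\ne0\})$. $\sigma_s(x)_{2,p}^{(\omega)}=\inf\{\|x-z\|_{2,p}^{(\omega)}:\|z\|_0^{(\omega)}\le s\}$. Definition ($\ell^p_\omega$-BRNSP): $A$ satisfies the weighted block $\ell^p$ robust null space property of order $s\ge\|\omega\|_\infty$ with constants $\rho\in(0,1)$, $\tau>0$ if $\|x[S]\|_{2,p}^{(\omega)}\le\frac{\rho}{s^{1-1/p}}\|x[S^c]\|_{2,1}^{(\omega)}+\tau\|Ax\|_2$ for all $x\in\mathbb R^N$ and all $S$ with $\omega(S)\le s$. *)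

From Stdlib Require Import Reals ClassicalEpsilon.
Open Scope R_scope.

(* Vectors in R^N are functions nat -> R (only indices 0..N-1 matter).
   Block structure: blk i in {0..B-1} is the block of index i in {0..N-1}.
   Block sets S are boolean predicates on {0..B-1}. *)

Fixpoint rsum (n : nat) (f : nat -> R) : R :=
  match n with O => 0 | S k => rsum k f + f k end.

(* (B_1,...,B_B) is a partition of {0..N-1}: every index lies in exactly one
   block (blk is a function), blocks are nonempty. *)
Definition is_block_partition (N B : nat) (blk : nat -> nat) : Prop :=
  (forall i, (i < N)%nat -> (blk i < B)%nat) /\
  (forall b, (b < B)%nat -> exists i, (i < N)%nat /\ blk i = b).

Definition block_norm (N : nat) (blk : nat -> nat) (x : nat -> R) (b : nat) : R :=
  sqrt (rsum N (fun i => if Nat.eqb (blk i) b then x i ^ 2 else 0)).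

Definition norm2 (N : nat) (x : nat -> R) : R := sqrt (rsum N (fun i => x i ^ 2)).

Definition wnorm21 (N B : nat) (blk : nat -> nat) (w : nat -> R) (x : nat -> R) : R :=
  rsum B (fun b => w b * block_norm N blk x b).

(* ||x||_{2,2}^(w) = (sum_b w_b^0 ||x[b]||_2^2)^(1/2) *)
Definition wnorm22 (N B : nat) (blk : nat -> nat) (x : nat -> R) : R :=
  sqrt (rsum B (fun b => block_norm N blk x b ^ 2)).

Definition restrict (blk : nat -> nat) (S : nat -> bool) (x : nat -> R) : nat -> R :=
  fun i => if S (blk i) then x i else 0.

Definition wS (B : nat) (w : nat -> R) (S : nat -> bool) : R :=
  rsum B (fun b => if S b then w b ^ 2 else 0).

(* ||w||_inf = max_b w_b (0 if there are no blocks) *)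
Definition winf (B : nat) (w : nat -> R) : R :=
  (fix go n := match n with O => 0 | S k => Rmax (go k) (w k) end) B.

Definition wnorm0 (N B : nat) (blk : nat -> nat) (w : nat -> R) (x : nat -> R) : R :=
  rsum B (fun b =>
    if excluded_middle_informative
         (exists i, (i < N)%nat /\ blk i = b /\ x i <> 0)
    then w b ^ 2 else 0).

(* Matrix A in R^{m x N} as A k i; (A x)_k. *)
Definition matvec (N : nat) (A : nat -> nat -> R) (x : nat -> R) : nat -> R :=
  fun k => rsum N (fun i => A k i * x i).

Definition is_inf (E : R -> Prop) (l : R) : Prop :=
  (forall r, E r -> l <= r) /\ (forall l', (forall r, E r -> l' <= r) -> l' <= l).

Definition Rinf (E : R -> Prop) : R :=
  epsilon (inhabits 0) (fun l => is_inf E l).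

Definition sigma21 (N B : nat) (blk : nat -> nat) (w : nat -> R) (s : R) (x : nat -> R) : R :=
  Rinf (fun r => exists z, wnorm0 N B blk w z <= s /\
                           r = wnorm21 N B blk w (fun i => x i - z i)).

Definition wBRNSP2 (m N B : nat) (blk : nat -> nat) (w : nat -> R)
    (A : nat -> nat -> R) (s rho tau : R) : Prop :=
  winf B w <= s /\ 0 < rho < 1 /\ 0 < tau /\
  forall (x : nat -> R) (S : nat -> bool),
    wS B w S <= s ->
    wnorm22 N B blk (restrict blk S x) <=
      rho / sqrt s * wnorm21 N B blk w (restrict blk (fun b => negb (S b)) x)
      + tau * norm2 m (matvec N A x).

(* Cauchy–Schwarz over a block set [S] with [ω(S) ≤ s] turns the ℓ² robust null space
   property into the ℓ¹ one, [‖v[S]‖_{2,1} ≤ ρ ‖v[S^c]‖_{2,1} + √s τ ‖Av‖_2].  For [v = x - x̂],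
   minimality of [x̂] and [S] the block support of an [s]-sparse [z] then give
   [(1-ρ) ‖v‖_{2,1} ≤ 2(1+ρ) ‖x - z‖_{2,1} + 2 √s τ ‖Av‖_2], and [‖Av‖_2 ≤ 2η] since both
   [x] and [x̂] are feasible.  For the ℓ² bound, the blocks with [‖v[b]‖_2 > w_b ‖v‖_{2,1} / s]
   have weight at most [s], so the null space property bounds them, while the remaining
   blocks carry ℓ² mass at most [‖v‖_{2,1} / √s]. *)

From Stdlib Require Import Reals ClassicalEpsilon Lra Lia.
Open Scope R_scope.

Lemma rsum_ext n f g : (forall i, (i < n)%nat -> f i = g i) -> rsum n f = rsum n g.
Proof.
  induction n as [|n IH]; intros Hfg; simpl; [reflexivity|].
  rewrite IH by (intros; apply Hfg; lia). rewrite Hfg by lia. reflexivity.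
Qed.

Lemma rsum_le n f g : (forall i, (i < n)%nat -> f i <= g i) -> rsum n f <= rsum n g.
Proof.
  induction n as [|n IH]; intros Hfg; simpl; [lra|].
  assert (rsum n f <= rsum n g) by (apply IH; intros; apply Hfg; lia).
  assert (f n <= g n) by (apply Hfg; lia). lra.
Qed.

Lemma rsum_add n f g : rsum n (fun i => f i + g i) = rsum n f + rsum n g.
Proof. induction n as [|n IH]; simpl; [lra|]. rewrite IH; lra. Qed.

Lemma rsum_scal n c f : rsum n (fun i => c * f i) = c * rsum n f.
Proof. induction n as [|n IH]; simpl; [lra|]. rewrite IH; lra. Qed.

Lemma rsum_0 n : rsum n (fun _ => 0) = 0.
Proof. induction n as [|n IH]; simpl; [lra|]. rewrite IH; lra. Qed.

Lemma rsum_nonneg n f : (forall i, (i < n)%nat -> 0 <= f i) -> 0 <= rsum n f.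
Proof. intros Hf. rewrite <- (rsum_0 n). apply rsum_le; auto. Qed.

Lemma term_le_rsum n f k :
  (forall i, (i < n)%nat -> 0 <= f i) -> (k < n)%nat -> f k <= rsum n f.
Proof.
  induction n as [|n IH]; intros Hf Hk; [lia|]. simpl.
  assert (0 <= f n) by (apply Hf; lia).
  destruct (Nat.eq_dec k n) as [->|Hkn].
  - assert (0 <= rsum n f) by (apply rsum_nonneg; intros; apply Hf; lia). lra.
  - assert (f k <= rsum n f) by (apply IH; [intros; apply Hf|]; lia). lra.
Qed.

Lemma rsum_swap B N h :
  rsum B (fun b => rsum N (fun i => h b i)) = rsum N (fun i => rsum B (fun b => h b i)).
Proof.
  induction B as [|B IH]; simpl; [symmetry; apply rsum_0|].
  rewrite IH, <- rsum_add. reflexivity.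
Qed.

Lemma rsum_eqb_indicator n k c :
  (k < n)%nat -> rsum n (fun b => if Nat.eqb k b then c else 0) = c.
Proof.
  induction n as [|n IH]; intros Hk; simpl; [lia|].
  destruct (Nat.eqb_spec k n) as [->|Hkn].
  - rewrite (rsum_ext n _ (fun _ => 0)), rsum_0; [lra|].
    intros b Hb. destruct (Nat.eqb_spec n b); [lia|reflexivity].
  - rewrite IH by lia. lra.
Qed.

Lemma rsum_split n (S : nat -> bool) f :
  rsum n f = rsum n (fun b => if S b then f b else 0) + rsum n (fun b => if S b then 0 else f b).
Proof. rewrite <- rsum_add. apply rsum_ext. intros b _. destruct (S b); ring. Qed.

Lemma norm2_nonneg n f : 0 <= norm2 n f.
Proof. apply sqrt_pos. Qed.

Lemma norm2_ext n f g : (forall i, (i < n)%nat -> f i = g i) -> norm2 n f = norm2 n g.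
Proof. intros Hfg. unfold norm2. f_equal. apply rsum_ext. intros i Hi. rewrite Hfg; auto. Qed.

Lemma rsum_sq_nonneg n f : 0 <= rsum n (fun i => f i ^ 2).
Proof. apply rsum_nonneg. intros. apply pow2_ge_0. Qed.

Lemma rsum_mul_le_norm2 n f g : rsum n (fun i => f i * g i) <= norm2 n f * norm2 n g.
Proof.
  unfold norm2. induction n as [|n IH]; cbn [rsum]; [rewrite sqrt_0; lra|].
  pose proof (sqrt_cauchy (norm2 n f) (f n) (norm2 n g) (g n)) as Hcs.
  unfold norm2, Rsqr in Hcs. rewrite !sqrt_sqrt in Hcs by apply rsum_sq_nonneg.
  replace (f n ^ 2) with (f n * f n) by ring. replace (g n ^ 2) with (g n * g n) by ring. lra.
Qed.

Lemma norm2_add_le n f g : norm2 n (fun i => f i + g i) <= norm2 n f + norm2 n g.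
Proof.
  pose proof (norm2_nonneg n f). pose proof (norm2_nonneg n g).
  unfold norm2 at 1. rewrite <- (sqrt_pow2 (norm2 n f + norm2 n g)) by lra.
  apply sqrt_le_1_alt.
  rewrite (rsum_ext n _ (fun i => f i ^ 2 + 2 * (f i * g i) + g i ^ 2)) by (intros; ring).
  rewrite !rsum_add, rsum_scal.
  pose proof (rsum_mul_le_norm2 n f g).
  replace ((norm2 n f + norm2 n g) ^ 2)
    with (norm2 n f ^ 2 + 2 * (norm2 n f * norm2 n g) + norm2 n g ^ 2) by ring.
  unfold norm2 in *. rewrite !pow2_sqrt by apply rsum_sq_nonneg. lra.
Qed.

Lemma norm2_opp n f : norm2 n (fun i => - f i) = norm2 n f.
Proof. unfold norm2. f_equal. apply rsum_ext. intros. ring. Qed.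

Lemma norm2_sub_le n f g : norm2 n (fun i => f i - g i) <= norm2 n f + norm2 n g.
Proof. rewrite <- (norm2_opp n g). apply norm2_add_le. Qed.

Lemma matvec_sub N A x z k :
  matvec N A (fun i => x i - z i) k = matvec N A x k - matvec N A z k.
Proof.
  unfold matvec.
  rewrite (rsum_ext N _ (fun i => A k i * x i + (-1) * (A k i * z i))) by (intros; ring).
  rewrite rsum_add, rsum_scal. ring.
Qed.

Lemma norm2_residual_eq_noise m N A x e y :
  (forall k, (k < m)%nat -> y k = matvec N A x k + e k) ->
  norm2 m (fun k => matvec N A x k - y k) = norm2 m e.
Proof.
  intros Hy. rewrite <- norm2_opp. apply norm2_ext. intros k Hk. rewrite Hy by exact Hk. ring.
Qed.

Lemma norm2_sub_le_tube n f g y eta :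
  norm2 n (fun k => f k - y k) <= eta -> norm2 n (fun k => g k - y k) <= eta ->
  norm2 n (fun k => f k - g k) <= 2 * eta.
Proof.
  intros Hf Hg.
  rewrite (norm2_ext n _ (fun k => (f k - y k) - (g k - y k))) by (intros; ring).
  pose proof (norm2_sub_le n (fun k => f k - y k) (fun k => g k - y k)). lra.
Qed.

Lemma Rinf_is_inf (E : R -> Prop) :
  (exists r, E r) -> (exists lb, forall r, E r -> lb <= r) -> is_inf E (Rinf E).
Proof.
  intros [r0 Hr0] [lb Hlb]. unfold Rinf. apply epsilon_spec.
  set (F := fun r => E (- r)).
  assert (HF : exists r, F r) by (exists (- r0); unfold F; rewrite Ropp_involutive; auto).
  assert (Hbnd : bound F) by (exists (- lb); intros r Hr; apply Hlb in Hr; lra).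
  destruct (completeness F Hbnd HF) as [M [HubM HleastM]].
  exists (- M). split.
  - intros r Hr. assert (F (- r)) as HFr by (unfold F; rewrite Ropp_involutive; auto).
    apply HubM in HFr. lra.
  - intros l Hl. assert (M <= - l) by (apply HleastM; intros r Hr; apply Hl in Hr; lra). lra.
Qed.

Lemma is_inf_le_affine E l P a c :
  is_inf E l -> 0 < a -> (forall r, E r -> P <= a * r + c) -> P <= a * l + c.
Proof.
  intros [_ Hgreatest] Ha Hbound.
  assert ((P - c) / a <= l).
  { apply Hgreatest. intros r Hr. apply Rmult_le_reg_l with a; auto.
    replace (a * ((P - c) / a)) with (P - c) by (field; lra). apply Hbound in Hr. lra. }
  replace P with (a * ((P - c) / a) + c) by (field; lra).
  apply Rplus_le_compat_r, Rmult_le_compat_l; lra.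
Qed.

Lemma winf_ge n w k : (k < n)%nat -> w k <= winf n w.
Proof.
  induction n as [|n IH]; intros Hk; [lia|].
  change (winf (S n) w) with (Rmax (winf n w) (w n)).
  destruct (Nat.eq_dec k n) as [->|Hkn]; [apply Rmax_r|].
  eapply Rle_trans; [apply IH; lia|apply Rmax_l].
Qed.

(* Also for [b = 0], where [a / 0 = 0]. *)
Lemma Rdiv_nonneg a b : 0 <= a -> 0 <= b -> 0 <= a / b.
Proof.
  intros Ha [Hb|<-]; [apply Rle_mult_inv_pos; assumption|].
  unfold Rdiv. rewrite Rinv_0, Rmult_0_r. lra.
Qed.

Lemma block_partition_no_blocks N blk : is_block_partition N 0 blk -> N = 0%nat.
Proof. intros [Hblk _]. destruct N as [|N]; [reflexivity|]. specialize (Hblk 0%nat). lia. Qed.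

Section BlockNorms.

Variables (N B : nat) (blk : nat -> nat) (w : nat -> R).
Hypothesis Hw : forall b, (b < B)%nat -> 0 <= w b.

Lemma block_norm_nonneg x b : 0 <= block_norm N blk x b.
Proof. apply sqrt_pos. Qed.

Lemma block_norm_norm2 x b :
  block_norm N blk x b = norm2 N (fun i => if Nat.eqb (blk i) b then x i else 0).
Proof. unfold block_norm, norm2. f_equal. apply rsum_ext. intros. destruct Nat.eqb; ring. Qed.

Lemma block_norm_ext x y b :
  (forall i, (i < N)%nat -> blk i = b -> x i = y i) ->
  block_norm N blk x b = block_norm N blk y b.
Proof.
  intros Hxy. rewrite !block_norm_norm2. apply norm2_ext. intros i Hi.
  destruct (Nat.eqb_spec (blk i) b); auto.
Qed.

Lemma block_norm_sub_le x y b :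
  block_norm N blk (fun i => x i - y i) b <= block_norm N blk x b + block_norm N blk y b.
Proof.
  rewrite !block_norm_norm2. eapply Rle_trans; [|apply norm2_sub_le].
  right. apply norm2_ext. intros. destruct Nat.eqb; ring.
Qed.

Lemma block_norm_le_sub_add x y b :
  block_norm N blk x b <= block_norm N blk (fun i => x i - y i) b + block_norm N blk y b.
Proof.
  rewrite !block_norm_norm2. eapply Rle_trans; [|apply norm2_add_le].
  right. apply norm2_ext. intros. destruct Nat.eqb; ring.
Qed.

Lemma block_norm_restrict S x b :
  block_norm N blk (restrict blk S x) b = if S b then block_norm N blk x b else 0.
Proof.
  destruct (S b) eqn:HSb.
  - apply block_norm_ext. intros i _ <-. unfold restrict. rewrite HSb. reflexivity.
  - rewrite (block_norm_ext _ (fun _ => 0)).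
    + unfold block_norm. rewrite (rsum_ext N _ (fun _ => 0)), rsum_0 by
        (intros; destruct Nat.eqb; ring). apply sqrt_0.
    + intros i _ <-. unfold restrict. rewrite HSb. reflexivity.
Qed.

Lemma norm2_wnorm22 x :
  (forall i, (i < N)%nat -> (blk i < B)%nat) -> norm2 N x = wnorm22 N B blk x.
Proof.
  intros Hblk. unfold norm2, wnorm22. f_equal.
  rewrite (rsum_ext B _ (fun b => rsum N (fun i => if Nat.eqb (blk i) b then x i ^ 2 else 0))).
  - rewrite rsum_swap. apply rsum_ext. intros i Hi. symmetry. apply rsum_eqb_indicator; auto.
  - intros b _. unfold block_norm. apply pow2_sqrt, rsum_nonneg.
    intros. destruct Nat.eqb; [apply pow2_ge_0|lra].
Qed.

Lemma wnorm22_restrict S x :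
  wnorm22 N B blk (restrict blk S x) =
  sqrt (rsum B (fun b => if S b then block_norm N blk x b ^ 2 else 0)).
Proof.
  unfold wnorm22. f_equal. apply rsum_ext. intros b _.
  rewrite block_norm_restrict. destruct (S b); ring.
Qed.

Lemma wnorm21_nonneg x : 0 <= wnorm21 N B blk w x.
Proof.
  apply rsum_nonneg. intros b Hb.
  apply Rmult_le_pos; [apply Hw; auto|apply block_norm_nonneg].
Qed.

Lemma wnorm21_restrict S x :
  wnorm21 N B blk w (restrict blk S x) =
  rsum B (fun b => if S b then w b * block_norm N blk x b else 0).
Proof.
  apply rsum_ext. intros b _. rewrite block_norm_restrict. destruct (S b); ring.
Qed.

Lemma wnorm21_restrict_split S x :
  wnorm21 N B blk w x =
  wnorm21 N B blk w (restrict blk S x) + wnorm21 N B blk w (restrict blk (fun b => negb (S b)) x).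
Proof.
  rewrite !wnorm21_restrict. unfold wnorm21. rewrite (rsum_split B S).
  f_equal. apply rsum_ext. intros b _. destruct (S b); reflexivity.
Qed.

Lemma wnorm21_restrict_le S x : wnorm21 N B blk w (restrict blk S x) <= wnorm21 N B blk w x.
Proof.
  rewrite (wnorm21_restrict_split S x).
  pose proof (wnorm21_nonneg (restrict blk (fun b => negb (S b)) x)). lra.
Qed.

Lemma wnorm21_restrict_sub_le S x y :
  wnorm21 N B blk w (restrict blk S (fun i => x i - y i)) <=
  wnorm21 N B blk w (restrict blk S x) + wnorm21 N B blk w (restrict blk S y).
Proof.
  rewrite !wnorm21_restrict, <- rsum_add. apply rsum_le. intros b Hb.
  pose proof (Hw b Hb). pose proof (block_norm_sub_le x y b). destruct (S b); nra.
Qed.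

Lemma wnorm21_restrict_le_sub_add S x y :
  wnorm21 N B blk w (restrict blk S x) <=
  wnorm21 N B blk w (restrict blk S (fun i => x i - y i)) + wnorm21 N B blk w (restrict blk S y).
Proof.
  rewrite !wnorm21_restrict, <- rsum_add. apply rsum_le. intros b Hb.
  pose proof (Hw b Hb). pose proof (block_norm_le_sub_add x y b). destruct (S b); nra.
Qed.

Lemma wnorm21_restrict_le_sqrt_wS S x :
  wnorm21 N B blk w (restrict blk S x) <= sqrt (wS B w S) * wnorm22 N B blk (restrict blk S x).
Proof.
  rewrite wnorm21_restrict.
  rewrite (rsum_ext B _ (fun b => (if S b then w b else 0) * block_norm N blk (restrict blk S x) b))
    by (intros; rewrite block_norm_restrict; destruct (S i); ring).
  eapply Rle_trans; [apply rsum_mul_le_norm2|]. right. f_equal.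
  unfold wS, norm2. f_equal. apply rsum_ext. intros b _. destruct (S b); ring.
Qed.

Lemma wnorm21_error_le_of_l1_nsp rho K S x xhat :
  0 <= rho <= 1 -> wnorm21 N B blk w xhat <= wnorm21 N B blk w x ->
  wnorm21 N B blk w (restrict blk S (fun i => x i - xhat i)) <=
    rho * wnorm21 N B blk w (restrict blk (fun b => negb (S b)) (fun i => x i - xhat i)) + K ->
  (1 - rho) * wnorm21 N B blk w (fun i => x i - xhat i) <=
    2 * (1 + rho) * wnorm21 N B blk w (restrict blk (fun b => negb (S b)) x) + 2 * K.
Proof.
  intros Hrho Hmin Hnsp.
  pose proof (wnorm21_restrict_split S x). pose proof (wnorm21_restrict_split S xhat).
  pose proof (wnorm21_restrict_split S (fun i => x i - xhat i)).
  pose proof (wnorm21_restrict_le_sub_add S x xhat).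
  pose proof (wnorm21_restrict_sub_le (fun b => negb (S b)) x xhat).
  set (Sc := fun b => negb (S b)) in *. set (v := fun i => x i - xhat i) in *.
  set (vS := wnorm21 N B blk w (restrict blk S v)) in *.
  set (vSc := wnorm21 N B blk w (restrict blk Sc v)) in *.
  set (xSc := wnorm21 N B blk w (restrict blk Sc x)) in *.
  assert (HvSc : vSc <= vS + 2 * xSc) by lra.
  assert (HvSc' : (1 - rho) * vSc <= 2 * xSc + K) by lra.
  assert ((1 - rho) * (vS + vSc) <= (1 - rho) * ((1 + rho) * vSc + K))
    by (apply Rmult_le_compat_l; lra).
  assert ((1 + rho) * ((1 - rho) * vSc) <= (1 + rho) * (2 * xSc + K))
    by (apply Rmult_le_compat_l; lra).
  nra.
Qed.

Definition block_support (z : nat -> R) (b : nat) : bool :=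
  if excluded_middle_informative (exists i, (i < N)%nat /\ blk i = b /\ z i <> 0)
  then true else false.

Lemma wS_block_support z : wS B w (block_support z) = wnorm0 N B blk w z.
Proof.
  apply rsum_ext. intros b _. unfold block_support.
  destruct excluded_middle_informative; reflexivity.
Qed.

Lemma wnorm21_off_support_le x z :
  wnorm21 N B blk w (restrict blk (fun b => negb (block_support z b)) x) <=
  wnorm21 N B blk w (fun i => x i - z i).
Proof.
  rewrite wnorm21_restrict. apply rsum_le. intros b Hb. unfold block_support.
  destruct excluded_middle_informative as [_|Hoff]; simpl.
  - apply Rmult_le_pos; [apply Hw; auto|apply block_norm_nonneg].
  - right. f_equal. apply block_norm_ext. intros i Hi Hib.
    destruct (Req_dec (z i) 0) as [Hz|Hz]; [rewrite Hz; ring|].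
    exfalso. apply Hoff. eauto.
Qed.

Lemma sigma21_is_inf s x :
  0 <= s ->
  is_inf (fun r => exists z, wnorm0 N B blk w z <= s /\ r = wnorm21 N B blk w (fun i => x i - z i))
    (sigma21 N B blk w s x).
Proof.
  intros Hs. apply Rinf_is_inf.
  - exists (wnorm21 N B blk w (fun i => x i - 0)), (fun _ => 0). split; [|reflexivity].
    unfold wnorm0. rewrite (rsum_ext B _ (fun _ => 0)), rsum_0; [lra|].
    intros b _. destruct excluded_middle_informative as [[i [_ [_ Hi]]]|]; [lra|reflexivity].
  - exists 0. intros r [z [_ ->]]. apply wnorm21_nonneg.
Qed.

Lemma sigma21_nonneg s x : 0 <= s -> 0 <= sigma21 N B blk w s x.
Proof.
  intros Hs. apply (proj2 (sigma21_is_inf s x Hs)).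
  intros r [z [_ ->]]. apply wnorm21_nonneg.
Qed.

Lemma le_affine_sigma21 s x P a c :
  0 <= s -> 0 < a ->
  (forall z, wnorm0 N B blk w z <= s -> P <= a * wnorm21 N B blk w (fun i => x i - z i) + c) ->
  P <= a * sigma21 N B blk w s x + c.
Proof.
  intros Hs Ha Hbound. apply (is_inf_le_affine _ _ _ _ _ (sigma21_is_inf s x Hs) Ha).
  intros r [z [Hz ->]]. auto.
Qed.

Lemma wnorm21_error_le_sigma21 rho K s x xhat :
  0 <= s -> 0 <= rho <= 1 -> wnorm21 N B blk w xhat <= wnorm21 N B blk w x ->
  (forall S, wS B w S <= s ->
     wnorm21 N B blk w (restrict blk S (fun i => x i - xhat i)) <=
     rho * wnorm21 N B blk w (restrict blk (fun b => negb (S b)) (fun i => x i - xhat i)) + K) ->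
  (1 - rho) * wnorm21 N B blk w (fun i => x i - xhat i) <=
    2 * (1 + rho) * sigma21 N B blk w s x + 2 * K.
Proof.
  intros Hs Hrho Hmin Hnsp. apply le_affine_sigma21; [exact Hs|lra|].
  intros z Hz.
  assert (HS : wS B w (block_support z) <= s) by (rewrite wS_block_support; exact Hz).
  eapply Rle_trans;
    [apply (wnorm21_error_le_of_l1_nsp rho K (block_support z)); [exact Hrho|exact Hmin|apply Hnsp, HS]|].
  apply Rplus_le_compat_r, Rmult_le_compat_l; [lra|apply wnorm21_off_support_le].
Qed.

End BlockNorms.

Section Recovery.

Variables (m N B : nat) (blk : nat -> nat) (w : nat -> R) (A : nat -> nat -> R).
Variables (s rho tau : R).
Hypothesis Hw : forall b, (b < B)%nat -> 0 <= w b.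
Hypothesis Hblk : forall i, (i < N)%nat -> (blk i < B)%nat.
Hypothesis Hs : 0 < s.
Hypothesis Hnsp : wBRNSP2 m N B blk w A s rho tau.

Lemma wBRNSP2_l1 v S :
  wS B w S <= s ->
  wnorm21 N B blk w (restrict blk S v) <=
    rho * wnorm21 N B blk w (restrict blk (fun b => negb (S b)) v) +
    sqrt s * tau * norm2 m (matvec N A v).
Proof.
  intros HS. destruct Hnsp as (_ & _ & _ & Hl2).
  pose proof (Hl2 v S HS) as Hv.
  assert (Hrs : 0 < sqrt s) by (apply sqrt_lt_R0; exact Hs).
  eapply Rle_trans; [apply wnorm21_restrict_le_sqrt_wS; exact Hw|].
  eapply Rle_trans.
  { apply Rmult_le_compat; [apply sqrt_pos|apply sqrt_pos|apply sqrt_le_1_alt, HS|exact Hv]. }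
  right. field. lra.
Qed.

Definition large_blocks (v : nat -> R) (b : nat) : bool :=
  if Rlt_dec (w b * wnorm21 N B blk w v) (block_norm N blk v b * s) then true else false.

Lemma wS_large_blocks_le v : wS B w (large_blocks v) <= s.
Proof.
  set (T := wnorm21 N B blk w v).
  assert (HwaT : forall b, (b < B)%nat -> w b * block_norm N blk v b <= T).
  { intros b Hb. apply (term_le_rsum B (fun b => w b * block_norm N blk v b)); auto.
    intros i Hi. apply Rmult_le_pos; [apply Hw; auto|apply block_norm_nonneg]. }
  destruct (wnorm21_nonneg N B blk w Hw v) as [HT|HT]; fold T in HT.
  - apply Rmult_le_reg_r with T; auto.
    unfold wS. rewrite Rmult_comm, <- rsum_scal.
    apply Rle_trans with (rsum B (fun b => s * (w b * block_norm N blk v b))).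
    + apply rsum_le. intros b Hb. pose proof (Hw b Hb). pose proof (block_norm_nonneg N blk v b).
      unfold large_blocks. fold T. destruct Rlt_dec as [Hlt|].
      * pose proof (Rmult_le_compat_l (w b) _ _ H (Rlt_le _ _ Hlt)). nra.
      * rewrite Rmult_0_r. apply Rmult_le_pos; [lra|]. apply Rmult_le_pos; assumption.
    + rewrite rsum_scal. right. unfold T, wnorm21. ring.
  - unfold wS. rewrite (rsum_ext B _ (fun _ => 0)), rsum_0; [lra|].
    intros b Hb. unfold large_blocks. fold T. destruct Rlt_dec as [Hlt|]; [|reflexivity].
    pose proof (HwaT b Hb). pose proof (Hw b Hb).
    rewrite <- HT in *. assert (Hwb : w b = 0) by nra. rewrite Hwb. ring.
Qed.

Lemma sqrt_mul_wnorm22_small_blocks_le v :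
  sqrt s * wnorm22 N B blk (restrict blk (fun b => negb (large_blocks v b)) v) <=
  wnorm21 N B blk w v.
Proof.
  set (T := wnorm21 N B blk w v).
  assert (HT : 0 <= T) by apply (wnorm21_nonneg N B blk w Hw).
  rewrite wnorm22_restrict, <- sqrt_mult_alt by lra.
  rewrite <- (sqrt_pow2 T HT). apply sqrt_le_1_alt.
  rewrite <- rsum_scal.
  apply Rle_trans with (T * rsum B (fun b => if large_blocks v b then 0 else w b * block_norm N blk v b)).
  - rewrite <- rsum_scal. apply rsum_le. intros b Hb.
    pose proof (Hw b Hb). pose proof (block_norm_nonneg N blk v b).
    unfold large_blocks. fold T. destruct Rlt_dec; simpl; nra.
  - replace (T ^ 2) with (T * T) by ring. apply Rmult_le_compat_l; [exact HT|].
    apply rsum_le. intros b Hb.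
    pose proof (Hw b Hb). pose proof (block_norm_nonneg N blk v b).
    destruct (large_blocks v b); nra.
Qed.

Lemma sqrt_mul_norm2_le v :
  sqrt s * norm2 N v <=
  (1 + rho) * wnorm21 N B blk w v + sqrt s * tau * norm2 m (matvec N A v).
Proof.
  destruct Hnsp as (_ & _ & _ & Hl2).
  set (L := large_blocks v). set (Lc := fun b => negb (L b)).
  assert (Hrs : 0 < sqrt s) by (apply sqrt_lt_R0; exact Hs).
  assert (Hsplit : norm2 N v <= wnorm22 N B blk (restrict blk L v) + wnorm22 N B blk (restrict blk Lc v)).
  { rewrite <- !(norm2_wnorm22 N B) by exact Hblk.
    eapply Rle_trans; [|apply norm2_add_le]. right. apply norm2_ext. intros i _.
    unfold restrict, Lc. destruct (L (blk i)); simpl; ring. }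
  pose proof (Hl2 v L (wS_large_blocks_le v)) as HL.
  pose proof (sqrt_mul_wnorm22_small_blocks_le v) as HLc.
  pose proof (wnorm21_restrict_le N B blk w Hw Lc v).
  assert (Hrho : 0 <= rho) by (destruct Hnsp as (_ & ? & _); lra).
  apply Rle_trans with (sqrt s * wnorm22 N B blk (restrict blk L v) + wnorm21 N B blk w v).
  - pose proof (Rmult_le_compat_l (sqrt s) _ _ (Rlt_le _ _ Hrs) Hsplit) as Hsplit'.
    rewrite Rmult_plus_distr_l in Hsplit'. fold L Lc in HLc. lra.
  - apply Rle_trans with (sqrt s * (rho / sqrt s * wnorm21 N B blk w v + tau * norm2 m (matvec N A v))
                          + wnorm21 N B blk w v).
    + apply Rplus_le_compat_r, Rmult_le_compat_l; [lra|].
      eapply Rle_trans; [exact HL|]. apply Rplus_le_compat_r, Rmult_le_compat_l; [|assumption].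
      apply Rle_mult_inv_pos; lra.
    + right. field. lra.
Qed.

End Recovery.

Lemma recovery_error_arith rho rs tau sigma eta alpha T n :
  0 < rho < 1 -> 0 < rs -> 0 <= tau -> 0 <= sigma -> 0 <= alpha <= 2 * eta ->
  (1 - rho) * T <= 2 * (1 + rho) * sigma + 2 * (rs * tau * alpha) ->
  rs * n <= (1 + rho) * T + rs * tau * alpha ->
  let C := (1 + rho) ^ 2 / (1 - rho) in
  let D := (3 + rho) / (1 - rho) * tau in
  T <= 2 * C * sigma + 2 * D * rs * eta /\ n <= 2 * C * sigma / rs + 2 * D * eta.
Proof.
  intros Hrho Hrs Htau Hsigma Halpha Hl1 Hl2 C D.
  assert (Hrta : rs * tau * alpha <= rs * tau * (2 * eta))
    by (apply Rmult_le_compat_l; [apply Rmult_le_pos|]; lra).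
  assert (Hrte : 0 <= rs * tau * eta) by (repeat apply Rmult_le_pos; lra).
  split.
  - apply Rmult_le_reg_l with (1 - rho); [lra|].
    replace ((1 - rho) * (2 * C * sigma + 2 * D * rs * eta))
      with (2 * (1 + rho) ^ 2 * sigma + 2 * (3 + rho) * (rs * tau * eta)) by (unfold C, D; field; lra).
    assert (0 <= rho * (1 + rho) * sigma) by (repeat apply Rmult_le_pos; lra).
    nra.
  - apply Rmult_le_reg_l with ((1 - rho) * rs); [apply Rmult_lt_0_compat; lra|].
    replace ((1 - rho) * rs * (2 * C * sigma / rs + 2 * D * eta))
      with (2 * (1 + rho) ^ 2 * sigma + 2 * (3 + rho) * (rs * tau * eta)) by (unfold C, D; field; lra).
    assert ((1 - rho) * (rs * n) <= (1 - rho) * ((1 + rho) * T + rs * tau * alpha))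
      by (apply Rmult_le_compat_l; lra).
    assert ((1 + rho) * ((1 - rho) * T) <= (1 + rho) * (2 * (1 + rho) * sigma + 2 * (rs * tau * alpha)))
      by (apply Rmult_le_compat_l; lra).
    nra.
Qed.

Theorem mainTheorem5
  (m N B : nat) (blk : nat -> nat) (w : nat -> R)
  (Hpart : is_block_partition N B blk)
  (Hw : forall b, (b < B)%nat -> 1 <= w b)
  (A : nat -> nat -> R) (s rho tau : R)
  (Hs : winf B w ^ 2 <= s)
  (HNSP : wBRNSP2 m N B blk w A s rho tau)
  (x e y xhat : nat -> R) (eta : R)
  (Hy : forall k, (k < m)%nat -> y k = matvec N A x k + e k)
  (He : norm2 m e <= eta)
  (Hfeas : norm2 m (fun k => matvec N A xhat k - y k) <= eta)
  (Hmin : forall z : nat -> R,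
      norm2 m (fun k => matvec N A z k - y k) <= eta ->
      wnorm21 N B blk w xhat <= wnorm21 N B blk w z) :
  let C := (1 + rho) ^ 2 / (1 - rho) in
  let D := (3 + rho) / (1 - rho) * tau in
  wnorm21 N B blk w (fun i => x i - xhat i)
    <= 2 * C * sigma21 N B blk w s x + 2 * D * sqrt s * eta /\
  norm2 N (fun i => x i - xhat i)
    <= 2 * C * sigma21 N B blk w s x / sqrt s + 2 * D * eta.
Proof.
  intros C D. pose proof HNSP as (_ & Hrho & Htau & _).
  assert (Hw0 : forall b, (b < B)%nat -> 0 <= w b) by (intros b Hb; specialize (Hw b Hb); lra).
  assert (Hs0 : 0 <= s) by (pose proof (pow2_ge_0 (winf B w)); lra).
  assert (Hsigma : 0 <= sigma21 N B blk w s x) by (apply sigma21_nonneg; assumption).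
  assert (Hx : norm2 m (fun k => matvec N A x k - y k) <= eta)
    by (rewrite (norm2_residual_eq_noise m N A x e y Hy); exact He).
  assert (HAv : norm2 m (matvec N A (fun i => x i - xhat i)) <= 2 * eta).
  { rewrite (norm2_ext m _ (fun k => matvec N A x k - matvec N A xhat k))
      by (intros; apply matvec_sub).
    exact (norm2_sub_le_tube m _ _ y eta Hx Hfeas). }
  destruct (Nat.eq_dec B 0) as [->|HB].
  - pose proof (block_partition_no_blocks N blk Hpart) as ->.
    assert (Heta : 0 <= eta) by (pose proof (norm2_nonneg m e); lra).
    unfold wnorm21, norm2; cbn [rsum]. rewrite sqrt_0.
    assert (HC : 0 <= C) by (apply Rdiv_nonneg; [apply pow2_ge_0|lra]).
    assert (HD : 0 <= D) by (apply Rmult_le_pos; [apply Rdiv_nonneg|]; lra).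
    pose proof (sqrt_pos s). clearbody C D.
    split; apply Rplus_le_le_0_compat; try apply Rdiv_nonneg; repeat apply Rmult_le_pos; lra.
  - assert (Hs_pos : 0 < s).
    { pose proof (winf_ge B w (B - 1) ltac:(lia)). pose proof (Hw (B - 1)%nat ltac:(lia)). nra. }
    apply recovery_error_arith with (alpha := norm2 m (matvec N A (fun i => x i - xhat i)));
      [lra|apply sqrt_lt_R0; lra|lra|exact Hsigma|split; [apply norm2_nonneg|exact HAv]| |].
    + apply (wnorm21_error_le_sigma21 N B blk w Hw0); [lra|lra|apply Hmin, Hx|].
      intros S HS. apply (wBRNSP2_l1 m N B blk w A s rho tau); assumption.
    + apply (sqrt_mul_norm2_le m N B blk w A s rho tau Hw0); [apply Hpart|assumption|assumption].
Qed.
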